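(* Let $q$ be odd and let $C$ be an $[n,k]$ code over $\mathbb{F}_q$ with $C^\perp\neq\{\bm 0\}$ and $d(C^\perp)>3$. Then $\gamma(C)\le k-d(C^\perp)+2$.
   Context: An $[n,k]$ code over $\mathbb{F}_q$ is a $k$-dimensional subspace $C\subseteq\mathbb{F}_q^n$; write $E=\{1,\dots,n\}$. For $\bm{x}\in\mathbb{F}_q^n$, $\mathrm{supp}(\bm{x})=\{i: x_i\neq 0\}$ and the weight is $|\mathrm{supp}(\bm{x})|$; for $B\subseteq\mathbb{F}_q^n$, $\mathrm{Supp}(B)=\bigcup_{\bm{x}\in B}\mathrm{supp}(\bm{x})$. $C^\perp$ is the dual code with respect to the standard inner product and $d(C^\perp)$ is the minimum weight of a nonzero codeword of $C^\perp$. The covering dimension is $\gamma(C)=\infty$ if $\mathrm{Supp}(C)\neq E$, and otherwise $\gamma(C)$ is the least positive integer $r$ such that $C$ has an $r$-dimensional subspace $D$ with $\mathrm{Supp}(D)=E$. *)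

From HB Require Import structures.
From mathcomp Require Import all_boot all_order all_algebra all_field.
Set Implicit Arguments. Unset Strict Implicit. Unset Printing Implicit Defensive.
Import GRing.Theory.
Local Open Scope ring_scope.

(* Codes of length n over a finite field F are subspaces C : {vspace 'rV[F]_n};
   coordinates E = {1..n} are indexed by 'I_n. *)

Section Codes.
Variables (F : finFieldType) (n : nat).

Definition supp (x : 'rV[F]_n) : {set 'I_n} := [set i | x 0 i != 0].

Definition wt (x : 'rV[F]_n) : nat := #|supp x|.

Definition Supp (B : {pred 'rV[F]_n}) : {set 'I_n} :=
  \bigcup_(x | x \in B) supp x.

Definition dotp (x y : 'rV[F]_n) : F := \sum_(i < n) x 0 i * y 0 i.

Definition dual (C : {vspace 'rV[F]_n}) : {set 'rV[F]_n} :=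
  [set y | [forall x, (x \in C) ==> (dotp x y == 0)]].

(* minimum weight of a nonzero codeword of B (meaningful when B has a nonzero
   vector; every weight is <= n so the default n is harmless then) *)
Definition min_dist (B : {set 'rV[F]_n}) : nat :=
  \big[minn/n]_(y | (y \in B) && (y != 0)) wt y.

(* gamma(C) = r (finite): Supp(C) = E and r is the least positive integer such
   that some r-dimensional subspace D of C has Supp(D) = E.  gamma(C) = infinity
   corresponds to no r satisfying this predicate. *)
Definition covering_dim (C : {vspace 'rV[F]_n}) (r : nat) : Prop :=
  [/\ Supp (fun x => x \in C) = [set: 'I_n],
      (0 < r)%N,
      exists D : {vspace 'rV[F]_n},
        [/\ (D <= C)%VS, \dim D = r & Supp (fun x => x \in D) = [set: 'I_n]]
    & forall D : {vspace 'rV[F]_n}, (D <= C)%VS -> (0 < \dim D)%N ->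
        Supp (fun x => x \in D) = [set: 'I_n] -> (r <= \dim D)%N].

End Codes.

From HB Require Import structures.
From mathcomp Require Import all_boot all_order all_algebra all_field.
From mathcomp Require Import zify ring.
From Stdlib Require Import Classical.
Set Implicit Arguments. Unset Strict Implicit. Unset Printing Implicit Defensive.
Import GRing.Theory.
Local Open Scope ring_scope.

(* Let d = d(C^perp) and m = d - 1.  As no nonzero dual word has weight <= m,
   C projects onto F^m on the first m coordinates, so the subcode K of codewords
   vanishing there has dimension k - m.  On C, each coordinate j that K does not
   cover is a linear form sum_l c_(l,j) x_l in the first m coordinates; the weight
   bound again forces all c_(l,j) to be nonzero and the ratios c_(1,j) / c_(0,j) to
   be pairwise distinct, so there are fewer than q such j.  For q > 2 (this is
   where q odd is used) one then finds a codeword x nonzero on the first m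
   coordinates and on all uncovered ones, and D = K + <x> has full support and
   dimension at most k - m + 1 = k - d + 2. *)

Lemma exists_neq01 (F : finFieldType) :
  (2 < #|F|)%N -> exists x : F, (x != 0) && (x != 1).
Proof.
move=> F2; have /subsetPn[x _] : ~~ ([set: F] \subset [set 0; 1]).
  apply/negP => /subset_leq_card; rewrite cardsT cards2 => /(leq_trans F2).
  by case: (_ != _).
by rewrite !inE negb_or; exists x.
Qed.

Lemma exists_mul_addr_neq0 (F : finFieldType) (c s : F) :
  (2 < #|F|)%N -> c != 0 -> exists2 t : F, t != 0 & c * t + s != 0.
Proof.
move=> F2 c0; have [cs0|/negbNE/eqP cs0] := boolP (c + s != 0).
  by exists 1; rewrite ?oner_eq0 ?mulr1.
have [x /andP[x0 x1]] := exists_neq01 F2.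
have -> : s = - c by apply/eqP; rewrite -addr_eq0 addrC cs0.
by exists x; rewrite // -{2}[c]mulr1 -mulrBr mulf_neq0 // subr_eq0.
Qed.

Lemma exists_notin_imset (T U : finType) (f : T -> U) (A : {set T}) :
  (#|A| < #|U|)%N -> exists a, a \notin f @: A.
Proof.
move=> AU; have /subsetPn[a _ aN] : ~~ ([set: U] \subset f @: A).
  apply/negP => /subset_leq_card; rewrite cardsT leqNgt.
  by rewrite (leq_ltn_trans (leq_imset_card f A) AU).
by exists a.
Qed.

Lemma exists_nowhere_zero_nonvanishing (F : finFieldType) (T L : finType)
    (I : {set T}) (c : T -> L -> F) (l0 l1 l2 : L) :
  (2 < #|F|)%N -> l0 != l1 -> l0 != l2 -> l1 != l2 -> (#|I| < #|F|)%N ->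
  {in I, forall i l, c i l != 0} ->
  exists lam : L -> F, (forall l, lam l != 0) /\
    {in I, forall i, \sum_l c i l * lam l != 0}.
Proof.
move=> F2 n01 n02 n12 cardI cnz.
have [I0|[i0 i0I]] := set_0Vmem I.
  by exists (fun=> 1); split=> [l|i]; rewrite ?oner_eq0 // I0 inE.
pose s := \sum_(l | (l != l0) && (l != l1) && (l != l2)) c i0 l.
have [t t0 ts] := exists_mul_addr_neq0 s F2 (cnz i0 i0I l2).
pose tau l := if l == l2 then t else 1.
pose part i := \sum_(l | (l != l0) && (l != l1)) c i l * tau l.
have part_i0 : part i0 != 0.
  rewrite /part /tau (bigD1 l2) /=; last by rewrite eq_sym n02 eq_sym n12.
  rewrite eqxx; under eq_bigr => l /andP[_ /negbTE->] do rewrite mulr1.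
  exact: ts.
(* With this [mu] the combination for [i0] is [c i0 l0 * lam l0]: its forbidden
   value [root i0] is [0], so every admissible [lam l0] is nonzero. *)
pose mu := - part i0 / c i0 l1.
pose root i := - (c i l1 * mu + part i) / c i l0.
have root_i0 : root i0 = 0.
  by rewrite /root /mu mulrCA divff ?cnz // mulr1 addNr oppr0 mul0r.
have [a aN] := exists_notin_imset root cardI.
exists (fun l => if l == l0 then a else if l == l1 then mu else tau l); split.
  move=> l; case: ifP => _.
    by apply: contraNneq aN => ->; rewrite -root_i0 imset_f.
  case: ifP => _; first by rewrite mulf_neq0 ?oppr_eq0 ?invr_eq0 ?cnz.
  by rewrite /tau; case: ifP; rewrite ?oner_eq0.
move=> i iI; rewrite (bigD1 l0) //= eqxx (bigD1 l1) /=; last by rewrite eq_sym n01.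
rewrite [l1 == l0]eq_sym (negbTE n01) eqxx.
have -> : \sum_(l | (l != l0) && (l != l1))
    c i l * (if l == l0 then a else if l == l1 then mu else tau l) = part i.
  by apply: eq_bigr => l /andP[/negbTE-> /negbTE->].
apply: contra aN => /eqP sum0; apply/imsetP; exists i => //.
apply: (mulfI (cnz i iI l0)); rewrite /root mulrCA divff ?cnz // mulr1.
by apply/eqP; rewrite -addr_eq0 sum0.
Qed.

Lemma bigminn_le (T : eqType) (r : seq T) (P : pred T) (f : T -> nat) x0 y :
  y \in r -> P y -> (\big[minn/x0]_(z <- r | P z) f z <= f y)%N.
Proof.
elim: r => // a r IH; rewrite inE big_cons => /orP[/eqP<-|yr] Py.
  by rewrite Py geq_minl.
by case: ifP => _; [rewrite geq_min IH ?orbT | exact: IH].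
Qed.

Lemma widen_ord_inj n m (le_mn : (m <= n)%N) : injective (widen_ord le_mn).
Proof. by move=> a b /(congr1 val) /= /val_inj. Qed.

Section Duality.
Variables (F : finFieldType) (n : nat).
Implicit Types (C D : {vspace 'rV[F]_n}) (x y : 'rV[F]_n).

Lemma dotp_mx x y : dotp x y = (x *m y^T) 0 0.
Proof. by rewrite /dotp mxE; apply: eq_bigr => i _; rewrite mxE. Qed.

Lemma dotp_row p x (N : 'M[F]_(p, n)) j : dotp x (row j N) = (x *m N^T) 0 j.
Proof. by rewrite /dotp mxE; apply: eq_bigr => i _; rewrite !mxE. Qed.

Lemma dual_memP C y : reflect (forall x, x \in C -> dotp x y = 0) (y \in dual C).
Proof.
rewrite inE; apply: (iffP forallP) => [h x xC|h x].
  by move: (h x); rewrite xC => /eqP.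
by apply/implyP => /h ->.
Qed.

Lemma dual_subZ C y y' k : y \in dual C -> y' \in dual C -> y - k *: y' \in dual C.
Proof.
move=> /dual_memP yC /dual_memP y'C; apply/dual_memP => x xC.
have -> : dotp x (y - k *: y') = dotp x y - k * dotp x y'.
  rewrite /dotp mulr_sumr -sumrB; apply: eq_bigr => i _.
  by rewrite !mxE mulrBr mulrCA.
by rewrite yC ?y'C // mulr0 subr0.
Qed.

Definition basis_mx C : 'M[F]_(\dim C, n) := \matrix_i (vbasis C)`_i.

Lemma memv_basis_mx C x : (x \in C) = (x <= basis_mx C)%MS.
Proof.
apply/idP/submxP => [xC | [a ->]].
  exists (\row_i coord (vbasis C) i x); rewrite mulmx_sum_row {1}(coord_vbasis xC).
  by apply: eq_bigr => i _; rewrite rowK mxE.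
rewrite mulmx_sum_row; apply: memv_suml => i _; apply: memvZ.
by rewrite rowK; apply/vbasis_mem/mem_nth; rewrite size_tuple.
Qed.

Lemma basis_mx_dual C y : basis_mx C *m y^T = 0 -> y \in dual C.
Proof.
move=> By; apply/dual_memP => x; rewrite memv_basis_mx => /submxP[a ->].
by rewrite dotp_mx -mulmxA By mulmx0 mxE.
Qed.

Lemma Supp_subv C D : (D <= C)%VS -> Supp (fun x => x \in D) \subset Supp (fun x => x \in C).
Proof.
move=> DC; apply/subsetP => j /bigcupP[x xD xj].
by apply/bigcupP; exists x; rewrite // (subvP DC).
Qed.

Lemma covering_dim_le C D : (0 < n)%N -> (D <= C)%VS ->
  Supp (fun x => x \in D) = [set: 'I_n] ->
  exists2 r, covering_dim C r & (r <= \dim D)%N.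
Proof.
move=> n0; move Nd : (\dim D) => N; elim/ltn_ind: N D Nd => N IH D dD DC SD.
have [[D' [D'C SD' ltD']] | noD'] := classic (exists D' : {vspace 'rV[F]_n},
    [/\ (D' <= C)%VS, Supp (fun x => x \in D') = [set: 'I_n] & (\dim D' < N)%N]).
  have [r cr le_r] := IH _ ltD' D' erefl D'C SD'.
  by exists r => //; apply: leq_trans le_r (ltnW ltD').
exists N; rewrite ?dD //; split.
- by apply/eqP; rewrite eqEsubset subsetT -SD Supp_subv.
- have /bigcupP[x xD] : Ordinal n0 \in Supp (fun x => x \in D) by rewrite SD inE.
  rewrite inE -dD lt0n dimv_eq0; apply: contraNneq => D0.
  by move: xD; rewrite D0 memv0 => /eqP->; rewrite mxE.
- by exists D.
- move=> D' D'C _ SD'; rewrite leqNgt; apply/negP => ltD'.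
  by apply: noD'; exists D'.
Qed.

End Duality.
Section FirstCoordinates.
Variables (F : finFieldType) (n m : nat) (C : {vspace 'rV[F]_n}).
Hypothesis le_mn : (m <= n)%N.
Hypothesis dual_wt_gt : forall y, y \in dual C -> y != 0 -> (m < wt y)%N.

Implicit Types (x z : 'rV[F]_n).

Local Notation w := (widen_ord le_mn).

Definition sel_mx : 'M[F]_(n, m) := colsub w (1%:M : 'M[F]_n).

Definition sel_coords : {set 'I_n} := w @: [set: 'I_m].

Lemma sel_mxE i l : sel_mx i l = (i == w l)%:R.
Proof. by rewrite !mxE. Qed.

Lemma mul_sel_mx x l : (x *m sel_mx) 0 l = x 0 (w l).
Proof. by rewrite mulmx_colsub mulmx1 mxE. Qed.

Lemma sel_mxTK : sel_mx^T *m sel_mx = 1%:M.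
Proof.
rewrite trmx_mxsub trmx1 -mxsub_mul mul1mx.
by apply/matrixP => i j; rewrite !mxE (inj_eq (@widen_ord_inj _ _ le_mn)).
Qed.

Lemma sel_mx_notin i l : i \notin sel_coords -> sel_mx i l = 0.
Proof. by rewrite sel_mxE; case: eqP => // -> /negP[]; apply: imset_f. Qed.

Lemma sum_sel_mx l0 (a : 'I_m -> F) : \sum_l sel_mx (w l0) l * a l = a l0.
Proof.
rewrite (bigD1 l0) //= sel_mxE eqxx mul1r big1 ?addr0 // => l ll0.
by rewrite sel_mxE (inj_eq (@widen_ord_inj _ _ le_mn)) eq_sym (negbTE ll0) mul0r.
Qed.

Lemma card_sel_coords_imset (A : {set 'I_m}) : #|w @: A| = #|A|.
Proof. exact/card_imset/widen_ord_inj. Qed.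

Lemma dual_eq0_supp_small (S : {set 'I_n}) z : z \in dual C ->
  (forall j, j \notin S -> z 0 j = 0) -> (#|S| <= m)%N -> z = 0.
Proof.
move=> zC zS; apply: contraTeq => z0; rewrite -ltnNge.
apply: leq_trans (dual_wt_gt zC z0) _; apply: subset_leq_card.
by apply/subsetP => j; rewrite inE; apply: contraR => /zS ->; rewrite eqxx.
Qed.

Lemma row_full_basis_sel : row_full (basis_mx C *m sel_mx).
Proof.
set G := basis_mx C *m sel_mx.
suff : kermx G^T == 0 by rewrite kermx_eq0 /row_free mxrank_tr.
apply/rowV0P => u /sub_kermxP uG.
pose y := u *m sel_mx^T.
have Gu : G *m u^T = 0 by rewrite -[LHS]trmxK trmx_mul trmxK uG trmx0.
have yC : y \in dual C by apply: basis_mx_dual; rewrite trmx_mul trmxK mulmxA Gu.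
have y0 : y = 0.
  apply: (dual_eq0_supp_small (S := sel_coords) yC).
    by move=> j jS; rewrite mxE big1 // => l _; rewrite mxE sel_mx_notin ?mulr0.
  by rewrite card_sel_coords_imset cardsT card_ord.
by rewrite -[u]mulmx1 -sel_mxTK mulmxA -/y y0 mul0mx.
Qed.

Definition lift_mx : 'M[F]_(m, n) := pinvmx (basis_mx C *m sel_mx) *m basis_mx C.

Lemma lift_mxK : lift_mx *m sel_mx = 1%:M.
Proof.
rewrite -mulmxA -[pinvmx _]mul1mx mulmxKpV //.
exact/submx_full/row_full_basis_sel.
Qed.

Lemma mem_lift_mx (u : 'rV_m) : u *m lift_mx \in C.
Proof. by rewrite memv_basis_mx mulmxA submxMl. Qed.

Definition shortened : {vspace 'rV[F]_n} := (C :&: lker (linfun (mulmxr sel_mx)))%VS.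

Lemma mem_shortened x : (x \in shortened) = (x \in C) && (x *m sel_mx == 0).
Proof. by rewrite memv_cap memv_ker lfunE. Qed.

Lemma dim_shortened : (\dim shortened + m <= \dim C)%N.
Proof.
rewrite -(limg_ker_dim (linfun (mulmxr sel_mx)) C) leq_add2l.
have : (fullv <= linfun (mulmxr sel_mx) @: C)%VS.
  apply/subvP => u _.
  have -> : u = linfun (mulmxr sel_mx) (u *m lift_mx).
    by rewrite lfunE /= -mulmxA lift_mxK mulmx1.
  exact/memv_img/mem_lift_mx.
by move/dimvS; rewrite dimvf dim_matrix mul1r.
Qed.

Lemma sub_lift_shortened x : x \in C -> x - x *m sel_mx *m lift_mx \in shortened.
Proof.
move=> xC; rewrite mem_shortened memvB ?mem_lift_mx //=.
by rewrite mulmxBl -[_ *m lift_mx *m _]mulmxA lift_mxK mulmx1 subrr.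
Qed.

Definition uncovered : {set 'I_n} :=
  [set j | (j \notin sel_coords) && [forall z, (z \in shortened) ==> (z 0 j == 0)]].

(* On [uncovered] coordinates every codeword [x] satisfies
   [x_j = sum_l x_(w l) * lift_mx l j], which [dual_col j] records as a dual word. *)
Definition dual_col j : 'rV[F]_n := row j (1%:M - sel_mx *m lift_mx)^T.

Lemma dual_colE j i : dual_col j 0 i = (i == j)%:R - \sum_l sel_mx i l * lift_mx l j.
Proof. by rewrite !mxE. Qed.

Lemma dual_col_out j i : i \notin sel_coords -> dual_col j 0 i = (i == j)%:R.
Proof.
by move=> iS; rewrite dual_colE big1 ?subr0 // => l _; rewrite sel_mx_notin ?mul0r.
Qed.

Lemma dual_col_sel j l : j \notin sel_coords -> dual_col j 0 (w l) = - lift_mx l j.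
Proof.
move=> jS; rewrite dual_colE sum_sel_mx; case: eqP => [wj|_]; last by rewrite sub0r.
by case/negP: jS; rewrite -wj imset_f.
Qed.

Lemma dual_col_dual j : j \in uncovered -> dual_col j \in dual C.
Proof.
rewrite inE => /andP[_ /forallP jK]; apply/dual_memP => x xC.
rewrite dotp_row trmxK mulmxBr mulmx1 mulmxA.
by apply/eqP; move: (jK (x - x *m sel_mx *m lift_mx)); rewrite sub_lift_shortened.
Qed.

Lemma uncovered_out j : j \in uncovered -> j \notin sel_coords.
Proof. by rewrite inE => /andP[]. Qed.

Lemma lift_mx_neq0 j l : j \in uncovered -> lift_mx l j != 0.
Proof.
move=> jU; have jS := uncovered_out jU; apply/eqP => Q0.
have : dual_col j = 0.
  apply: (dual_eq0_supp_small (S := j |: w @: [set~ l])) (dual_col_dual jU) _ _.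
    move=> i; rewrite !inE negb_or => /andP[ij iN].
    have [/imsetP[l' _ il']|iS] := boolP (i \in sel_coords); last first.
      by rewrite dual_col_out // (negbTE ij).
    move: iN; rewrite il' (mem_imset _ _ (@widen_ord_inj _ _ le_mn)) !inE negbK.
    by move=> /eqP->; rewrite dual_col_sel // Q0 oppr0.
  rewrite cardsU1 card_sel_coords_imset cardsC1 card_ord.
  by have := ltn_ord l; case: (_ \notin _) => /=; lia.
move/(congr1 (fun v : 'rV_n => v 0 j)); rewrite dual_col_out // eqxx mxE.
by move/eqP; rewrite oner_eq0.
Qed.

Lemma uncovered_ratio_inj (l0 l1 : 'I_m) : l0 != l1 ->
  {in uncovered &, injective (fun j => lift_mx l1 j / lift_mx l0 j)}.
Proof.
move=> n01 j j' jU j'U /= req; apply/eqP; apply: contraT => jj'.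
have [jS j'S] := (uncovered_out jU, uncovered_out j'U).
pose k := lift_mx l0 j / lift_mx l0 j'.
pose z := dual_col j - k *: dual_col j'.
have zE i : z 0 i = dual_col j 0 i - k * dual_col j' 0 i by rewrite !mxE.
have : z = 0.
  apply: (dual_eq0_supp_small (S := [set j; j'] :|: w @: ~: [set l0; l1])).
  - by apply: dual_subZ; apply: dual_col_dual.
  - move=> i; rewrite !inE !negb_or => /andP[/andP[ij ij'] iN].
    have [/imsetP[l _ il]|iS] := boolP (i \in sel_coords); last first.
      by rewrite zE !dual_col_out // (negbTE ij) (negbTE ij') mulr0 subrr.
    move: iN; rewrite il (mem_imset _ _ (@widen_ord_inj _ _ le_mn)) !inE negbK.
    case/orP=> /eqP->; rewrite zE !dual_col_sel //.
      by rewrite /k mulrN divfK ?lift_mx_neq0 // subrr.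
    have -> : lift_mx l1 j = lift_mx l1 j' / lift_mx l0 j' * lift_mx l0 j.
      by rewrite -req divfK ?lift_mx_neq0.
    by rewrite /k; ring.
  - have := cardsC [set l0; l1]; rewrite cards2 n01 card_ord => cardC.
    apply: leq_trans (leq_card_setU _ _).1 _.
    by rewrite cards2 jj' card_sel_coords_imset cardC.
move/(congr1 (fun v : 'rV_n => v 0 j)); rewrite zE !dual_col_out //.
by rewrite eqxx (negbTE jj') mulr0 subr0 mxE => /eqP; rewrite oner_eq0.
Qed.

Lemma card_uncovered_lt (l0 l1 : 'I_m) : l0 != l1 -> (#|uncovered| < #|F|)%N.
Proof.
move=> n01; pose r j := lift_mx l1 j / lift_mx l0 j.
have : r @: uncovered \subset [set~ 0].
  apply/subsetP => _ /imsetP[j jU ->].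
  by rewrite !inE mulf_neq0 ?invr_eq0 ?lift_mx_neq0.
move/subset_leq_card; rewrite card_in_imset ?cardsC1; last exact: uncovered_ratio_inj.
by move/leq_ltn_trans; apply; rewrite ltn_predL (ltnW (card_finNzRing_gt1 F)).
Qed.

Lemma exists_full_supp_subspace : (3 <= m)%N -> (2 < #|F|)%N ->
  exists D : {vspace 'rV[F]_n}, [/\ (D <= C)%VS, (\dim D + m <= \dim C + 1)%N
     & Supp (fun x => x \in D) = [set: 'I_n]].
Proof.
move=> m3 F2.
have /card_gt2P[l0 [l1 [l2 [_ [n01 n12 n20]]]]] : (2 < #|'I_m|)%N by rewrite card_ord.
rewrite eq_sym in n20.
have [lam [lam0 lamU]] := exists_nowhere_zero_nonvanishing (c := fun j l => lift_mx l j)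
  F2 n01 n20 n12 (card_uncovered_lt n01) (fun j jU l => lift_mx_neq0 l jU).
pose xs := \row_l lam l *m lift_mx.
have xsE j : xs 0 j = \sum_l lift_mx l j * lam l.
  by rewrite mxE; apply: eq_bigr => l _; rewrite mxE mulrC.
have xsD : xs \in (shortened + <[xs]>)%VS by apply/(subvP (addvSr _ _))/memv_line.
exists (shortened + <[xs]>)%VS; split.
- by rewrite subv_add capvSl -memvE mem_lift_mx.
- have dim_xs : (\dim <[xs]> <= 1)%N by rewrite dim_vline; case: (xs != 0).
  apply: leq_trans (leq_add (dimv_add_leqif _ _).1 (leqnn m)) _.
  by rewrite addnAC leq_add ?dim_shortened.
apply/setP => j; rewrite inE.
suff [x xD xj] : exists2 x, x \in (shortened + <[xs]>)%VS & x 0 j != 0.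
  by apply/bigcupP; exists x; rewrite ?inE.
have [/imsetP[l _ ->]|jS] := boolP (j \in sel_coords).
  by exists xs => //; rewrite -mul_sel_mx -mulmxA lift_mxK mulmx1 mxE.
have [/existsP[z /andP[zK zj]]|] := boolP [exists z, (z \in shortened) && (z 0 j != 0)].
  by exists z => //; rewrite (subvP (addvSl _ _)).
rewrite negb_exists => /forallP jK.
have jU : j \in uncovered.
  rewrite inE jS; apply/forallP => z; apply/implyP => zK.
  by move: (jK z); rewrite zK negbK.
by exists xs => //; rewrite xsE lamU.
Qed.

End FirstCoordinates.

Theorem mainTheorem10 (F : finFieldType) (n : nat) (C : {vspace 'rV[F]_n}) :
  odd #|F| ->
  (exists2 y, y \in dual C & y != 0) ->
  (3 < min_dist (dual C))%N ->
  exists r, covering_dim C r /\ (r + min_dist (dual C) <= \dim C + 2)%N.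
Proof.
move=> oddF [y yC y0] d3; set d := min_dist (dual C) in d3 *.
have d_le y' : y' \in dual C -> y' != 0 -> (d <= wt y')%N.
  move=> y'C y'0; apply: bigminn_le; first exact: mem_index_enum.
  by rewrite y'C y'0.
have wt_gt y' : y' \in dual C -> y' != 0 -> (d.-1 < wt y')%N.
  by move=> y'C y'0; rewrite prednK ?d_le //; lia.
have le_mn : (d.-1 <= n)%N.
  apply: ltnW (leq_trans (wt_gt y yC y0) _).
  by rewrite /wt -[X in (_ <= X)%N]card_ord max_card.
have F2 : (2 < #|F|)%N by move: (card_finNzRing_gt1 F) oddF; case: #|F| => [|[|[]]].
have [|D [DC dimD SD]] := exists_full_supp_subspace le_mn wt_gt _ F2; first by lia.
have [|r covr le_r] := covering_dim_le _ DC SD; first by lia.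
by exists r; split => //; lia.
Qed.
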